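(* Let $\sigma\in\mathcal{S}_n(132)$, and let $s$ be the number of elements $(i,j)\in\mathcal{E}(\sigma)$ satisfying $i+j<n$. Then the number of Schröder permutations $\pi\in\mathcal{S}_n$ with $\phi(\pi)=\sigma$ equals $2^s$.
   Context: $\mathcal{S}_n(T)$ is the set of permutations of $\{1,\dots,n\}$ avoiding every pattern in $T$ (a permutation avoids $\tau\in\mathcal{S}_k$ if no subsequence of length $k$ is in the same relative order as $\tau$). A Schröder permutation is one avoiding both $1243$ and $2143$. Represent $\pi\in\mathcal{S}_n$ by an $n\times n$ array, rows $i$ numbered top to bottom, columns $j$ left to right, with a dot in square $(i,\pi_i)$. The diagram $D(\pi)$ is the set of squares $(i,j)$ with $\pi_i>j$ and $\pi^{-1}(j)>i$. The essential set $\mathcal{E}(\pi)$ is the set of $(i,j)\in D(\pi)$ with $(i+1,j)\notin D(\pi)$ and $(i,j+1)\notin D(\pi)$ (squares outside the array count as not in $D(\pi)$). The rank of $(i,j)$ with respect to $\pi$ is $\rho_\pi(i,j)=\#\{k<i:\pi_k<j\}$; $\mathcal{E}_r(\pi)$ is the set of elements of $\mathcal{E}(\pi)$ of rank $r$. A permutation is uniquely determined by its essential set together with the ranks of its elements (Fulton). For a Schröder permutation $\pi\in\mathcal{S}_n$, let $\mathcal{E}^*(\pi)$ be obtained from $\mathcal{E}(\pi)$ by replacing each $(i,j)\in\mathcal{E}_1(\pi)$ by $(i-1,j-1)$; there is a unique $\sigma\in\mathcal{S}_n$ with $\mathcal{E}(\sigma)=\mathcal{E}^*(\pi)$ and all elements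 of $\mathcal{E}(\sigma)$ of rank $0$ (with respect to $\sigma$), and one sets $\phi(\pi)=\sigma$; this $\sigma$ avoids $132$. *)

(* Permutations of {1..n} are modelled as {perm 'I_n}
   (0-based: row/column/value k here corresponds to k+1 in the paper). *)
From mathcomp Require Import all_boot all_fingroup.
Set Implicit Arguments. Unset Strict Implicit. Unset Printing Implicit Defensive.

Section Defs.
Variable n : nat.
Implicit Types (p : {perm 'I_n}).

(* p contains the pattern t (t is a permutation of 0..k-1 given as a list):
   there is a strictly increasing choice of k positions whose values are
   in the same relative order as t. *)
Definition contains p (t : seq nat) : bool :=
  [exists f : {ffun 'I_(size t) -> 'I_n},
    [forall a : 'I_(size t), forall b : 'I_(size t),
       (a < b) ==> (f a < f b)] &&
    [forall a : 'I_(size t), forall b : 'I_(size t),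
       (p (f a) < p (f b)) == (nth 0 t a < nth 0 t b)]].

Definition avoids p (t : seq nat) : bool := ~~ contains p t.

Definition schroder p : bool :=
  avoids p [:: 0; 1; 3; 2] && avoids p [:: 1; 0; 3; 2].

(* Square (i,j) (row i, column j) is in the diagram D(p):
   p_i > j and p^{-1}(j) > i; squares outside the array are not in D(p). *)
Definition inD p (i j : nat) : bool :=
  [exists a : 'I_n, exists b : 'I_n,
     [&& val a == i, val b == j, b < p a & a < (p^-1)%g b]].

Definition ess p (i j : nat) : bool :=
  [&& inD p i j, ~~ inD p i.+1 j & ~~ inD p i j.+1].

Definition rank p (i j : nat) : nat :=
  #|[set k : 'I_n | (k < i) && (p k < j)]|.

Definition ess_star p (i j : nat) : bool :=
  (ess p i j && (rank p i j != 1)) || (ess p i.+1 j.+1 && (rank p i.+1 j.+1 == 1)).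

(* phi(p) = s : E(s) = E*(p) and every element of E(s) has rank 0 w.r.t. s.
   (The paper shows such s exists and is unique for Schröder p.) *)
Definition phi_rel p (s : {perm 'I_n}) : Prop :=
  (forall i j : nat, ess s i j = ess_star p i j) /\
  (forall i j : nat, ess s i j -> rank s i j = 0).

End Defs.

From mathcomp Require Import all_boot all_fingroup zify.
Set Implicit Arguments. Unset Strict Implicit. Unset Printing Implicit Defensive.

(* A 132-avoiding sigma is dominant: D(sigma) is the Ferrers shape of its
   prefix minima, all its squares have rank 0, and E(sigma) is the set of outer
   corners of that shape.  In a Schroder permutation pi every square of D(pi)
   has rank at most 1, so phi(pi) = sigma means that E(pi) is E(sigma) with some
   set L of corners (i, j) moved to rank-1 squares (i + 1, j + 1).  By Fulton's
   theorem L determines pi, and a rank-1 square (i + 1, j + 1) of a diagram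
   forces (i + 1) + (j + 1) < n, so L consists of inner corners.  Conversely
   every set of inner corners is realised by a permutation built greedily row by
   row, so pi |-> L is a bijection onto the subsets of the inner corners. *)

Section PermNat.
Variable n : nat.
Implicit Types (p : {perm 'I_n}).

Definition pfun p (k : nat) : nat :=
  if insub k is Some o then val (p o : 'I_n) else k.

Lemma pfunE p (o : 'I_n) : pfun p o = p o.
Proof. by rewrite /pfun valK. Qed.

Lemma pfun_Sub p k (lt_kn : k < n) : pfun p k = p (Sub k lt_kn).
Proof. by rewrite -[in LHS](_ : val (Sub k lt_kn : 'I_n) = k) // pfunE. Qed.

Lemma pfun_lt p k : k < n -> pfun p k < n.
Proof. by move=> lt_kn; rewrite (pfun_Sub p lt_kn). Qed.

Lemma pfunK p k : k < n -> pfun p^-1 (pfun p k) = k.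
Proof. by move=> lt_kn; rewrite (pfun_Sub p lt_kn) pfunE permK. Qed.

Lemma pfunVK p v : v < n -> pfun p (pfun p^-1 v) = v.
Proof. by move=> lt_vn; have := pfunK p^-1 lt_vn; rewrite invgK. Qed.

Lemma pfun_inj p k1 k2 : k1 < n -> k2 < n -> pfun p k1 = pfun p k2 -> k1 = k2.
Proof. by move=> lt1 lt2 eq12; rewrite -(pfunK p lt1) eq12 pfunK. Qed.

Lemma inDE p i j :
  inD p i j = [&& i < n, j < n, j < pfun p i & i < pfun p^-1 j].
Proof.
apply/existsP/idP.
  case=> a /existsP [b /and4P [/eqP <- /eqP <- ltba ltab]].
  by rewrite !pfunE !ltn_ord ltba ltab.
case/and4P=> lt_in lt_jn lt_ji lt_ij; exists (Sub i lt_in).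
by apply/existsP; exists (Sub j lt_jn); rewrite /= !eqxx -!pfunE /= lt_ji lt_ij.
Qed.

Lemma rankE p i j : i <= n ->
  rank p i j = count (fun k => pfun p k < j) (iota 0 i).
Proof.
move=> le_in; rewrite /rank cardsE cardE /enum_mem size_filter -enumT.
rewrite (eq_count (a2 := (fun k => (k < i) && (pfun p k < j)) \o val)); last first.
  by move=> k /=; rewrite pfunE.
rewrite -count_map val_enum_ord -(subnKC le_in) iotaD count_cat add0n.
rewrite (@eq_in_count _ _ pred0 (iota i (n - i))); last first.
  by move=> k; rewrite mem_iota => /andP [le_ik _]; rewrite /= ltnNge le_ik.
by rewrite count_pred0 addn0; apply: eq_in_count => k; rewrite mem_iota /= => ->.
Qed.

Lemma inD_lt p i j : inD p i j -> i.+1 < n.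
Proof. by rewrite inDE => /and4P [_ lt_jn _ ?]; have := pfun_lt p^-1 lt_jn; lia. Qed.

End PermNat.

Lemma count_iotaS (P : pred nat) i :
  count P (iota 0 i.+1) = count P (iota 0 i) + P i.
Proof. by rewrite -addn1 iotaD count_cat /= addn0. Qed.

Lemma count_iota_gt1P (P : pred nat) i :
  reflect (exists k1 k2, [/\ k1 < k2 < i, P k1 & P k2]) (1 < count P (iota 0 i)).
Proof.
apply: (iffP idP).
  elim: i => [|i IH] //; rewrite count_iotaS.
  case: (ltnP 1 (count P (iota 0 i))) => [/IH [k1 [k2 [lt12 P1 P2]]] _|le_c1].
    by exists k1, k2; split => //; lia.
  case Pi: (P i) => /= gt_c1; last by lia.
  have : 0 < count P (iota 0 i) by lia.
  rewrite -has_count => /hasP [k1]; rewrite mem_iota => /andP [_ lt_k1i] P1.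
  by exists k1, i; rewrite lt_k1i ltnSn P1 Pi.
case=> k1 [k2 [/andP [lt12 lt2i] P1 P2]].
rewrite -(subnKC (ltnW lt2i)) iotaD count_cat.
have : 0 < count P (iota 0 k2).
  by rewrite -has_count; apply/hasP; exists k1; rewrite ?mem_iota.
have : 0 < count P (iota (0 + k2) (i - k2)).
  by rewrite -has_count; apply/hasP; exists k2; rewrite ?mem_iota; lia.
lia.
Qed.

Section Patterns.
Variable n : nat.
Implicit Types (p : {perm 'I_n}) (t : seq nat).

Definition occurs_at p t (g : nat -> nat) : Prop :=
  [/\ forall a b, a < b < size t -> g a < g b,
      forall a, a < size t -> g a < n &
      forall a b, a < size t -> b < size t ->
        (pfun p (g a) < pfun p (g b)) = (nth 0 t a < nth 0 t b)].

Lemma containsP p t : reflect (exists g, occurs_at p t g) (contains p t).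
Proof.
apply: (iffP idP).
  case: t => [|x t]; first by exists id; split=> // a b /andP [_].
  case/existsP=> f /andP [/forallP f_incr /forallP f_val].
  pose o (k : nat) : 'I_(size t).+1 := inord k.
  have oK k : k < (size t).+1 -> o k = k :> nat by move=> lt_k; rewrite inordK.
  exists (fun k => val (f (o k))); split=> [a b /andP [lt_ab lt_b]|a _|a b lt_a lt_b].
  - have lt_a : a < (size t).+1 by move: lt_b => /=; lia.
    by have := forallP (f_incr (o a)) (o b); rewrite !oK // => /implyP; apply.
  - exact: ltn_ord.
  - by have /eqP := forallP (f_val (o a)) (o b); rewrite !pfunE !oK.
case: t => [|x t] [g [g_incr g_lt g_val]].
  apply/existsP; exists (ffun0 (card_ord 0)).
  by apply/andP; split; apply/forallP => -[].
pose f := [ffun a : 'I_(size (x :: t)) => insubd (Ordinal (g_lt 0 isT)) (g a)].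
have fE a : val (f a) = g a by rewrite ffunE val_insubd g_lt.
apply/existsP; exists f; apply/andP; split; apply/forallP => a; apply/forallP => b.
  by apply/implyP => lt_ab; rewrite !fE g_incr // lt_ab ltn_ord.
by rewrite -!pfunE !fE g_val.
Qed.

Lemma contains_1243_2143P p :
  reflect (exists i1 i2 i3 i4, [/\ i1 < i2 < i3, i3 < i4 < n &
     [/\ pfun p i1 < pfun p i4, pfun p i2 < pfun p i4 & pfun p i4 < pfun p i3]])
    (contains p [:: 0; 1; 3; 2] || contains p [:: 1; 0; 3; 2]).
Proof.
apply: (iffP orP).
  by case=> /containsP [g [g_incr g_lt g_val]]; exists (g 0), (g 1), (g 2), (g 3);
    rewrite !g_val ?g_incr ?g_lt.
case=> i1 [i2 [i3 [i4 [/andP [lt12 lt23] /andP [lt34 lt4n] [v14 v24 v43]]]]].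
pose g := nth 0 [:: i1; i2; i3; i4].
have g_incr a b : a < b < 4 -> g a < g b.
  by rewrite /g; case: a b => [|[|[|[|a]]]] [|[|[|[|b]]]] //=; lia.
have g_lt a : a < 4 -> g a < n by rewrite /g; case: a => [|[|[|[|a]]]] //=; lia.
have : pfun p i1 != pfun p i2 by apply: contra_neq (@pfun_inj _ p i1 i2 _ _) _; lia.
case: ltngtP => // v12 _; [left|right]; apply/containsP; exists g; split=> //;
  by rewrite /g; case=> [|[|[|[|a]]]] [|[|[|[|b]]]] //= _ _; apply/idP/idP; lia.
Qed.

Lemma contains_132P p :
  reflect (exists i1 i2 i3, i1 < i2 < i3 /\ i3 < n /\
                            pfun p i1 < pfun p i3 < pfun p i2)
    (contains p [:: 0; 2; 1]).
Proof.
apply: (iffP idP).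
  by case/containsP=> g [g_incr g_lt g_val]; exists (g 0), (g 1), (g 2);
    rewrite !g_val ?g_incr ?g_lt.
case=> i1 [i2 [i3 [/andP [lt12 lt23] [lt3n /andP [v13 v32]]]]].
apply/containsP; exists (nth 0 [:: i1; i2; i3]); split.
- by case=> [|[|[|a]]] [|[|[|b]]] //=; lia.
- by case=> [|[|[|a]]] //=; lia.
- by case=> [|[|[|a]]] [|[|[|b]]] //= _ _; apply/idP/idP; lia.
Qed.

Lemma schroder_rankP p :
  schroder p <-> forall i j, inD p i j -> rank p i j <= 1.
Proof.
rewrite /schroder /avoids -negb_or; split.
  move=> /contains_1243_2143P no_pat i j Dij; rewrite leqNgt; apply/negP => r_gt1.
  move: (Dij); rewrite inDE => /and4P [lt_in lt_jn lt_ji lt_ij].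
  move: r_gt1; rewrite rankE ?(ltnW lt_in) // => /count_iota_gt1P [k1 [k2 [lt_k P1 P2]]].
  apply: no_pat; exists k1, k2, i, (pfun p^-1 j); rewrite pfunVK //.
  by split; [| rewrite lt_ij pfun_lt | split].
move=> r_le1; apply/contains_1243_2143P.
case=> i1 [i2 [i3 [i4 [/andP [lt12 lt23] /andP [lt34 lt4n] [v14 v24 v43]]]]].
have D34 : inD p i3 (pfun p i4) by rewrite inDE pfun_lt ?pfunK ?v43 //; lia.
have := r_le1 _ _ D34; rewrite rankE; last by lia.
by rewrite leqNgt => /negP; apply; apply/count_iota_gt1P; exists i1, i2; rewrite lt12.
Qed.

Lemma avoid132_rank0 p :
  avoids p [:: 0; 2; 1] -> forall i j, inD p i j -> rank p i j = 0.
Proof.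
move=> /contains_132P no_pat i j; rewrite inDE => /and4P [lt_in lt_jn lt_ji lt_ij].
rewrite rankE ?(ltnW lt_in) //; apply/eqP; rewrite -leqn0 leqNgt -has_count.
apply/hasP => -[k]; rewrite mem_iota => /andP [_ lt_ki] v_kj.
apply: no_pat; exists k, i, (pfun p^-1 j); rewrite pfunVK // pfun_lt //.
by rewrite lt_ki lt_ij v_kj lt_ji.
Qed.

End Patterns.

Section Fulton.
Variable n : nat.
Implicit Types (p q : {perm 'I_n}).

(* Unlike [rank p i j], this counts the dots weakly north-west of (i, j). *)
Definition dots_nw p i j := count (fun k => pfun p k <= j) (iota 0 i.+1).

Lemma dots_nw0 p j : dots_nw p 0 j = (pfun p 0 <= j).
Proof. by rewrite /dots_nw /= addn0. Qed.

Lemma dots_nwS p i j : dots_nw p i.+1 j = dots_nw p i j + (pfun p i.+1 <= j).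
Proof. by rewrite /dots_nw count_iotaS. Qed.

Lemma count_pfun_eq p v m : v < n -> m <= n ->
  count (fun k => pfun p k == v) (iota 0 m) = (pfun p^-1 v < m).
Proof.
move=> lt_vn le_mn; rewrite (@eq_in_count _ _ (pred1 (pfun p^-1 v))); last first.
  move=> k; rewrite mem_iota /= => lt_km; apply/eqP/eqP => [<-|->].
    by rewrite pfunK //; lia.
  by rewrite pfunVK.
by rewrite count_uniq_mem ?iota_uniq // mem_iota.
Qed.

Lemma dots_nw_colS p i j : i < n -> j.+1 < n ->
  dots_nw p i j.+1 = dots_nw p i j + (pfun p^-1 j.+1 <= i).
Proof.
move=> lt_in lt_jn; rewrite /dots_nw -[_ <= i]ltnS -count_pfun_eq // -count_predUI.
rewrite (@eq_count _ (predI _ _) pred0) ?count_pred0 ?addn0.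
  by apply: eq_count => k /=; rewrite leq_eqVlt ltnS orbC.
by move=> k /=; case: (pfun p k =P j.+1) => [->|_]; rewrite ?ltnn ?andbF.
Qed.

Lemma dots_nw_col0 p i : i < n -> dots_nw p i 0 = (pfun p^-1 0 <= i).
Proof.
move=> lt_in; rewrite /dots_nw -[_ <= i]ltnS -count_pfun_eq //; last lia.
by apply: eq_count => k /=; rewrite leqn0.
Qed.

Lemma dots_nw_rank p i j : inD p i j -> dots_nw p i j = rank p i j.
Proof.
rewrite inDE => /and4P [lt_in lt_jn lt_ji lt_ij].
rewrite rankE ?(ltnW lt_in) // /dots_nw count_iotaS leqNgt lt_ji addn0.
apply: eq_in_count => k; rewrite mem_iota => /andP [_ lt_ki] /=.
rewrite leq_eqVlt; case: eqP => //= eq_kj.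
by have := pfunK p (ltn_trans lt_ki lt_in); rewrite eq_kj; lia.
Qed.

Section Comparison.
Variables p q : {perm 'I_n}.
Hypothesis le_ess : forall i j, ess p i j -> dots_nw q i j <= dots_nw p i j.

(* Walking down or right inside D(p) keeps dots_nw p constant and ends at an
   essential square. *)
Lemma dots_nw_le_diagram i j : inD p i j -> dots_nw q i j <= dots_nw p i j.
Proof.
have [d] := ubnP ((n - i) + (n - j)); elim: d i j => // d IH i j lt_d Dij.
move: (Dij); rewrite inDE => /and4P [lt_in lt_jn lt_ji lt_ij].
case Ddown: (inD p i.+1 j).
  move: (Ddown); rewrite inDE => /and4P [_ _ lt_j1 _].
  have <- : dots_nw p i.+1 j = dots_nw p i j by rewrite dots_nwS leqNgt lt_j1 addn0.
  by apply: leq_trans (IH _ _ _ Ddown); [rewrite dots_nwS leq_addr | lia].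
case Dright: (inD p i j.+1).
  move: (Dright); rewrite inDE => /and4P [_ lt_j1n _ lt_i1].
  have <- : dots_nw p i j.+1 = dots_nw p i j.
    by rewrite dots_nw_colS // leqNgt lt_i1 addn0.
  by apply: leq_trans (IH _ _ _ Dright); [rewrite dots_nw_colS ?leq_addr | lia].
by apply: le_ess; rewrite /ess Dij Ddown Dright.
Qed.

(* Outside D(p), the dot of p in row i or in column j lies weakly north-west
   of (i, j), so dots_nw p gains that dot when reaching (i, j). *)
Lemma dots_nw_le i j : i < n -> j < n -> dots_nw q i j <= dots_nw p i j.
Proof.
have [s] := ubnP (i + j); elim: s i j => // s IH i j lt_s lt_in lt_jn.
have [/dots_nw_le_diagram //|] := boolP (inD p i j).
rewrite inDE lt_in lt_jn /= negb_and -!leqNgt => /orP [le_ij | le_ji].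
  case: i lt_in lt_s le_ij => [|i] lt_in lt_s le_ij.
    by rewrite !dots_nw0 le_ij leq_b1.
  by rewrite !dots_nwS le_ij leq_add ?leq_b1 //; apply: IH; lia.
case: j lt_jn lt_s le_ji => [|j] lt_jn lt_s le_ji.
  by rewrite !dots_nw_col0 // le_ji leq_b1.
by rewrite !dots_nw_colS // le_ji leq_add ?leq_b1 //; apply: IH; lia.
Qed.

End Comparison.

Lemma dots_nw_inj p q :
  (forall i j, i < n -> j < n -> dots_nw p i j = dots_nw q i j) -> p = q.
Proof.
move=> eq_dots.
have b2n_inj (b c : bool) : b = c :> nat -> b = c by case: b; case: c.
have le_val i j : i < n -> j < n -> (pfun p i <= j) = (pfun q i <= j).
  case: i => [|i] lt_in lt_jn; apply: b2n_inj.
    by have := eq_dots 0 j lt_in lt_jn; rewrite !dots_nw0.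
  have := eq_dots i.+1 j lt_in lt_jn; rewrite !dots_nwS eq_dots //; last lia.
  by move/addnI.
apply/permP => o; apply: val_inj; rewrite /= -!pfunE.
have := le_val o (pfun p o) (ltn_ord o) (pfun_lt p (ltn_ord o)).
have := le_val o (pfun q o) (ltn_ord o) (pfun_lt q (ltn_ord o)).
rewrite !leqnn; lia.
Qed.

Lemma eq_perm_ess_rank p q : (forall i j, ess p i j = ess q i j) ->
  (forall i j, ess p i j -> rank p i j = rank q i j) -> p = q.
Proof.
move=> eq_ess eq_rank.
have eq_dots_ess i j : ess p i j -> dots_nw p i j = dots_nw q i j.
  move=> Eij; have /and3P [Dp _ _] := Eij.
  have /and3P [Dq _ _] : ess q i j by rewrite -eq_ess.
  by rewrite !dots_nw_rank // eq_rank.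
have le_pq := dots_nw_le (fun i j E => eq_leq (esym (eq_dots_ess i j E))).
have le_qp : forall i j, i < n -> j < n -> dots_nw p i j <= dots_nw q i j.
  by apply: dots_nw_le => i j E; rewrite eq_dots_ess // eq_ess.
by apply: dots_nw_inj => i j lt_in lt_jn; apply/eqP; rewrite eqn_leq le_pq ?le_qp.
Qed.

End Fulton.

Section Dominant.
Variable n : nat.
Implicit Types (p : {perm 'I_n}).

Fixpoint premin p i := if i is i'.+1 then minn (premin p i') (pfun p i) else pfun p 0.

Lemma premin_gtP p i j : j < premin p i <-> forall k, k <= i -> j < pfun p k.
Proof.
elim: i => [|i IH] /=.
  by split=> [lt_j k|]; [rewrite leqn0 => /eqP -> | apply].
rewrite leq_min; split.
  by case/andP=> /IH lt_j lt_ji k; rewrite leq_eqVlt => /orP [/eqP -> | /lt_j].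
by move=> lt_j; rewrite lt_j // andbT; apply/IH => k le_ki; apply: lt_j; lia.
Qed.

Lemma premin_le p i k : k <= i -> premin p i <= pfun p k.
Proof.
elim: i => [|i IH] le_ki /=; first by move: le_ki; rewrite leqn0 => /eqP ->.
rewrite geq_min; case: (ltnP k i.+1) => [lt_k | le_ik]; first by rewrite IH.
have -> : k = i.+1 by lia.
by rewrite leqnn orbT.
Qed.

Lemma premin_mono p i i' : i <= i' -> premin p i' <= premin p i.
Proof.
elim: i' => [|i' IH]; first by rewrite leqn0 => /eqP ->.
rewrite leq_eqVlt => /orP [/eqP -> // | /IH]; apply: leq_trans; exact: geq_minl.
Qed.

Lemma premin_lt p i : i < n -> premin p i < n.
Proof.
by move=> lt_in; apply: leq_ltn_trans (premin_le p (leq0n i)) (pfun_lt p _); lia.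
Qed.

Lemma premin_last p : 0 < n -> premin p n.-1 = 0.
Proof.
move=> n_gt0; apply/eqP; rewrite -leqn0.
have le_k : pfun p^-1 0 <= n.-1 by have := pfun_lt p^-1 n_gt0; lia.
by have := premin_le p le_k; rewrite pfunVK.
Qed.

(* The i + 1 values of rows 0..i are distinct and all at least premin p i. *)
Lemma premin_add_lt p i : i < n -> premin p i + i < n.
Proof.
move=> lt_in.
have uniq_vals : uniq (map (pfun p) (iota 0 i.+1)).
  rewrite map_inj_in_uniq ?iota_uniq // => a b; rewrite !mem_iota => lt_a lt_b.
  by apply: pfun_inj; lia.
have sub_vals : {subset map (pfun p) (iota 0 i.+1) <= iota (premin p i) (n - premin p i)}.
  move=> v /mapP [k]; rewrite mem_iota => lt_k ->; rewrite mem_iota premin_le; last lia.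
  by have := @pfun_lt _ p k; have := premin_lt p lt_in; lia.
have := uniq_leq_size uniq_vals sub_vals; rewrite size_map !size_iota.
by have := premin_lt p lt_in; lia.
Qed.

Lemma inD_rank0P p i j : (inD p i j /\ rank p i j = 0) <-> (i < n /\ j < premin p i).
Proof.
split.
  case; rewrite inDE => /and4P [lt_in lt_jn lt_ji lt_ij].
  rewrite rankE ?(ltnW lt_in) // => /eqP.
  rewrite -leqn0 leqNgt -has_count => /hasP none_left; split=> //.
  apply/premin_gtP => k; rewrite leq_eqVlt => /orP [/eqP -> // | lt_ki].
  rewrite ltn_neqAle; apply/andP; split.
    by apply/eqP => eq_jk; have := pfunK p (ltn_trans lt_ki lt_in); rewrite -eq_jk; lia.
  by rewrite leqNgt; apply/negP => lt_kj; apply: none_left; exists k; rewrite ?mem_iota.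
case=> lt_in /premin_gtP lt_j.
have lt_jn : j < n by have := lt_j 0 (leq0n _); have := @pfun_lt _ p 0; lia.
split.
  rewrite inDE lt_in lt_jn lt_j //= ltnNge; apply/negP => /lt_j.
  by rewrite pfunVK // ltnn.
rewrite rankE ?(ltnW lt_in) //; apply/eqP; rewrite -leqn0 leqNgt -has_count.
by apply/hasP => -[k]; rewrite mem_iota => /andP [_ lt_ki]; have := lt_j k; lia.
Qed.

Section Avoid132.
Variable p : {perm 'I_n}.
Hypothesis p132 : avoids p [:: 0; 2; 1].

Lemma inD_avoid132 i j : inD p i j = (i < n) && (j < premin p i).
Proof.
apply/idP/andP => [Dij | [lt_in lt_j]].
  by apply/inD_rank0P; split=> //; apply: avoid132_rank0.
by have [] := proj2 (inD_rank0P p i j) (conj lt_in lt_j).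
Qed.

Lemma ess_avoid132 i j :
  ess p i j = [&& i.+1 < n, premin p i.+1 < premin p i & j.+1 == premin p i].
Proof.
rewrite /ess !inD_avoid132; have := premin_mono p (leqnSn i).
case: (ltnP i.+1 n) => [lt_i1n | le_ni1]; first by move=> _; apply/idP/idP; lia.
case: (ltnP i n) => // lt_in _.
by rewrite (_ : i = n.-1) ?premin_last //=; lia.
Qed.

End Avoid132.

(* Rows 0..i have i + 1 - rank p i j values above j, all in (j, n). *)
Lemma rank_diagram_bound p i j : inD p i j -> i + j + 2 <= n + rank p i j.
Proof.
move=> Dij; have := dots_nw_rank Dij.
move: (Dij); rewrite inDE => /and4P [lt_in lt_jn lt_ji lt_ij].
pose above := [seq pfun p k | k <- iota 0 i.+1 & j < pfun p k].
have uniq_above : uniq above.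
  rewrite map_inj_in_uniq ?filter_uniq ?iota_uniq // => a b.
  rewrite !mem_filter !mem_iota => /andP [_ lt_a] /andP [_ lt_b].
  by apply: pfun_inj; lia.
have sub_above : {subset above <= iota j.+1 (n - j.+1)}.
  move=> v /mapP [k]; rewrite mem_filter mem_iota => /andP [lt_jk lt_k] ->.
  by rewrite mem_iota lt_jk /=; have := @pfun_lt _ p k; lia.
have := uniq_leq_size uniq_above sub_above; rewrite size_map size_filter size_iota.
have := count_predC (fun k => j < pfun p k) (iota 0 i.+1).
rewrite size_iota (@eq_count _ (predC _) (fun k => pfun p k <= j)) => [|k]; last first.
  by rewrite /= -leqNgt.
rewrite -/(dots_nw p i j); lia.
Qed.

End Dominant.

Lemma rank1_gt0 n (p : {perm 'I_n}) i j : i <= n -> rank p i j = 1 -> 0 < i /\ 0 < j.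
Proof.
move=> le_in; rewrite rankE //; case: i le_in => [|i] // _ r1; split=> //.
have : 0 < count (fun k => pfun p k < j) (iota 0 i.+1) by rewrite r1.
by rewrite -has_count => /hasP [k _]; lia.
Qed.

Lemma rank0_shift n (p : {perm 'I_n}) i j :
  inD p i j -> rank p i j = 0 -> rank p i.+1 j.+1 = 0.
Proof.
move=> Dij r0; have [lt_in /premin_gtP lt_j] := proj1 (inD_rank0P p i j) (conj Dij r0).
rewrite rankE //; apply/eqP; rewrite -leqn0 leqNgt -has_count.
by apply/hasP => -[k]; rewrite mem_iota => /andP [_ lt_ki]; have := lt_j k; lia.
Qed.

Section LiftedCorners.
Variables (n : nat) (sg : {perm 'I_n}).
Implicit Types (p : {perm 'I_n}).

Definition lifted p i j := [&& ess sg i j, ess p i.+1 j.+1 & rank p i.+1 j.+1 == 1].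

Definition lifted_set p : {set 'I_n * 'I_n} := [set x : 'I_n * 'I_n | lifted p x.1 x.2].

Definition inner_ess : {set 'I_n * 'I_n} :=
  [set x : 'I_n * 'I_n | ess sg x.1 x.2 && (x.1.+1 + x.2.+1 < n)].

Lemma lifted_set_sub p : lifted_set p \subset inner_ess.
Proof.
apply/subsetP => x; rewrite !inE => /and3P [Esg /and3P [D1 _ _] /eqP r1].
by rewrite Esg /=; have := rank_diagram_bound D1; rewrite r1; lia.
Qed.

Lemma lifted_setP p1 p2 :
  lifted_set p1 = lifted_set p2 -> forall i j, lifted p1 i j = lifted p2 i j.
Proof.
move=> eq_set i j.
have [lt_in|le_ni] := ltnP i n; last first.
  by rewrite /lifted /ess !inDE (_ : (i < n) = false) //; lia.
have [lt_jn|le_nj] := ltnP j n; last first.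
  by rewrite /lifted /ess !inDE (_ : (j < n) = false) ?andbF //; lia.
pose x := (Ordinal lt_in, Ordinal lt_jn).
have : (x \in lifted_set p1) = (x \in lifted_set p2) by rewrite eq_set.
by rewrite !inE.
Qed.

Section Preimage.
Variable pi : {perm 'I_n}.
Hypotheses (pi_schroder : schroder pi) (pi_phi : phi_rel pi sg).

Lemma ess_rank_le1 i j : ess pi i j -> rank pi i j <= 1.
Proof. by case/and3P=> Dij _ _; apply: (proj1 (schroder_rankP pi) pi_schroder). Qed.

Lemma ess_lifted i j : ess pi i j =
  (ess sg i j && ~~ lifted pi i j) || [&& 0 < i, 0 < j & lifted pi i.-1 j.-1].
Proof.
have [ess_sg _] := pi_phi.
apply/idP/idP => [Eij | ].
  have /and3P [Dij _ _] := Eij; have le_in : i <= n by move: Dij; rewrite inDE; lia.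
  have := ess_rank_le1 Eij; rewrite leq_eqVlt ltnS leqn0 => /orP [/eqP r1 | /eqP r0].
    have [i_gt0 j_gt0] := rank1_gt0 le_in r1.
    apply/orP; right.
    by rewrite i_gt0 j_gt0 /lifted ess_sg /ess_star !prednK // Eij r1 orbT.
  by rewrite ess_sg /ess_star Eij r0 /lifted (rank0_shift Dij r0) !andbF.
case/orP => [/andP [] | /and3P [i_gt0 j_gt0 /and3P [_]]]; last by rewrite !prednK.
rewrite ess_sg /ess_star => /orP [/andP [] // | /andP [E1 r1]].
by rewrite /lifted ess_sg /ess_star E1 r1 orbT.
Qed.

Lemma rank_lifted i j :
  ess pi i j -> rank pi i j = [&& 0 < i, 0 < j & lifted pi i.-1 j.-1].
Proof.
move=> Eij; have /and3P [Dij _ _] := Eij; have [ess_sg _] := pi_phi.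
have le_in : i <= n by move: Dij; rewrite inDE; lia.
have := ess_rank_le1 Eij; rewrite leq_eqVlt ltnS leqn0 => /orP [/eqP r1 | /eqP r0].
  have [i_gt0 j_gt0] := rank1_gt0 le_in r1.
  rewrite r1 i_gt0 j_gt0 /lifted !prednK // Eij r1 ess_sg /ess_star.
  by rewrite !prednK // Eij r1 orbT.
rewrite r0; case: (posnP i) => [-> // | i_gt0]; case: (posnP j) => [-> // | j_gt0].
case L: (lifted pi i.-1 j.-1) => //.
by move/and3P: L => [_ _]; rewrite !prednK // r0.
Qed.

End Preimage.

Lemma lifted_inj p1 p2 : schroder p1 -> phi_rel p1 sg -> schroder p2 -> phi_rel p2 sg ->
  lifted_set p1 = lifted_set p2 -> p1 = p2.
Proof.
move=> S1 phi1 S2 phi2 /lifted_setP eq_lifted; apply: eq_perm_ess_rank => i j.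
  by rewrite (ess_lifted S1 phi1) (ess_lifted S2 phi2) !eq_lifted.
move=> E1; have E2 : ess p2 i j.
  by rewrite (ess_lifted S2 phi2) -!eq_lifted -(ess_lifted S1 phi1).
by rewrite (rank_lifted S1 phi1 E1) (rank_lifted S2 phi2 E2) !eq_lifted.
Qed.

End LiftedCorners.

Section SuffixMax.
Variables (n : nat) (P : pred nat) (F : nat -> nat).

Definition smax i := \max_(i <= a < n | P a) F a.

Lemma smaxS i : i < n -> smax i = maxn (if P i then F i else 0) (smax i.+1).
Proof. by move=> lt_in; rewrite /smax big_ltn_cond //; case: (P i); rewrite ?max0n. Qed.

Lemma smax_out i : n <= i -> smax i = 0.
Proof. by move=> le_ni; rewrite /smax big_geq. Qed.

Lemma smax_leP i m : reflect (forall a, i <= a < n -> P a -> F a <= m) (smax i <= m).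
Proof.
apply: (iffP (bigmax_leqP_seq _ _ _ _)) => le_m a.
  by move=> lt_a; apply: le_m; rewrite mem_index_iota.
by rewrite mem_index_iota; apply: le_m.
Qed.

Lemma leq_smax i a : i <= a < n -> P a -> F a <= smax i.
Proof. by move=> lt_a; apply: leq_bigmax_seq; rewrite mem_index_iota. Qed.

Lemma smax_mono i i' : i <= i' -> smax i' <= smax i.
Proof.
move=> le_ii'; apply/smax_leP => a /andP [le_a lt_a] Pa.
by apply: leq_smax; rewrite // (leq_trans le_ii').
Qed.

Lemma smax_attained i : smax i = 0 \/ exists a, [/\ i <= a < n, P a & smax i = F a].
Proof.
rewrite /smax big_seq_cond; elim/big_ind: _ => [| x y | a]; first by left.
- by move=> Kx Ky; case: leqP.
- by case/andP; rewrite mem_index_iota => lt_a Pa; right; exists a.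
Qed.

End SuffixMax.

Section FirstFree.
Variable n : nat.

Definition first_free (s : seq nat) t := t + find (fun v => v \notin s) (iota t (n - t)).

Lemma first_freeP s t v : t <= v < n -> v \notin s ->
  [/\ t <= first_free s t, first_free s t < n, first_free s t \notin s &
      forall w, t <= w < first_free s t -> w \in s].
Proof.
move=> /andP [le_tv lt_vn] v_free.
have has_free : has (fun v => v \notin s) (iota t (n - t)).
  by apply/hasP; exists v; rewrite // mem_iota; lia.
have := has_free; rewrite has_find size_iota => lt_find.
have := nth_find 0 has_free; rewrite nth_iota // => ff_free.
rewrite /first_free; set k := find _ _ in lt_find ff_free *.
split=> [||// | w /andP [le_tw lt_w]]; try lia.
have lt_wt : w - t < k by lia.
have := before_find 0 lt_wt; rewrite nth_iota; last lia.
by rewrite subnKC // => /negbFE.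
Qed.

Lemma first_free_id s t : t < n -> t \notin s -> first_free s t = t.
Proof. by move=> lt_tn t_free; rewrite /first_free -(subnSK lt_tn) /= t_free addn0. Qed.

End FirstFree.

(* Corners of sg in M must move to rank-1 squares, the others must stay
   essential of rank 0.  Row i of the permutation Q built below receives the
   least value >= start i unused by the rows above; this makes row i of D(Q)
   equal to [0, mu i) when i is a reset row, and to [0, theta i] with a gap at
   column mu i otherwise, the gap being the value of an earlier row. *)
Section Construction.
Variables (n : nat) (sg : {perm 'I_n}) (M : {set 'I_n * 'I_n}).
Hypotheses (sg132 : avoids sg [:: 0; 2; 1]) (M_inner : M \subset inner_ess sg).

Local Notation lam := (premin sg).

Definition corner a := (a.+1 < n) && (lam a.+1 < lam a).
Definition marked a := [exists x in M, x.1 == a :> nat].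
Definition unmarked a := corner a && ~~ marked a.

(* As lam is nonincreasing, mu i (resp. rho i) is lam at the first unmarked
   corner row at or below i (resp. the first marked one at or below i - 1). *)
Definition mu i := smax n unmarked lam i.
Definition rho i := smax n marked lam i.-1.
Definition theta i := maxn (mu i) (rho i).
Definition reset i := (i == 0) || unmarked i.-1.
Definition start i := if reset i then mu i else (theta i).+1.

Lemma marked_corner a : marked a -> corner a /\ a + lam a + 1 < n.
Proof.
case/existsP=> x /andP [Mx /eqP eq_a].
have := subsetP M_inner x Mx; rewrite inE (ess_avoid132 sg132) eq_a.
case/andP=> /and3P [lt_a1 lt_lam /eqP eq_lam] inner.
by split; [rewrite /corner lt_a1 lt_lam | lia].
Qed.

Lemma mu_le_lam i : mu i <= lam i.
Proof. by apply/smax_leP => a /andP [le_ia _] _; apply: premin_mono. Qed.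

Lemma rhoS_le_lam i : rho i.+1 <= lam i.
Proof. by apply/smax_leP => a /andP [le_ia _] _; apply: premin_mono. Qed.

Lemma theta_add_lt i : i < n -> theta i + i < n.
Proof.
move=> lt_in; have := premin_add_lt sg lt_in; have := mu_le_lam i.
have : rho i <= n - i.-1 - 2.
  by apply/smax_leP => a /andP [le_a _] /marked_corner [_]; lia.
rewrite /theta; lia.
Qed.

Lemma mu_mono i i' : i <= i' -> mu i' <= mu i.
Proof. exact: smax_mono. Qed.

Lemma theta_mono i i' : i <= i' -> theta i' <= theta i.
Proof.
move=> le_ii'; have := mu_mono le_ii'.
have : rho i' <= rho i by apply: smax_mono; lia.
rewrite /theta; lia.
Qed.

Lemma mu_unmarked i : unmarked i -> [/\ mu i = lam i, mu i.+1 < mu i & i.+1 < n].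
Proof.
case/andP=> /andP [lt_i1 lt_lam] unmarked_i.
have mu_max : mu i = maxn (lam i) (mu i.+1).
  by rewrite /mu smaxS ?(ltnW lt_i1) // /unmarked /corner lt_i1 lt_lam unmarked_i.
by have := mu_le_lam i.+1; rewrite mu_max; split=> //; lia.
Qed.

Lemma muS i : ~~ unmarked i -> mu i.+1 = mu i.
Proof.
move=> not_unmarked; case: (ltnP i n) => lt_in.
  by rewrite /mu (smaxS _ _ lt_in) (negbTE not_unmarked) max0n.
by rewrite /mu !smax_out //; lia.
Qed.

Lemma rho_marked i : 0 < i -> marked i.-1 ->
  [/\ rho i = lam i.-1, rho i.+1 < rho i, lam i < lam i.-1 & i.+1 < n].
Proof.
move=> i_gt0 marked_i; have [/andP [lt_i1 lt_lam] inner] := marked_corner marked_i.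
rewrite prednK // in lt_i1 lt_lam.
have rho_max : rho i = maxn (lam i.-1) (rho i.+1).
  by rewrite /rho smaxS ?marked_i ?prednK //; lia.
by have := rhoS_le_lam i; rewrite rho_max; split=> //; lia.
Qed.

Lemma rhoS i : (i == 0) || ~~ marked i.-1 -> rho i.+1 = rho i.
Proof.
case: i => [|i] //= not_marked; case: (ltnP i n) => lt_in.
  by rewrite /rho /= (smaxS _ _ lt_in) (negbTE not_marked) max0n.
by rewrite /rho !smax_out //; lia.
Qed.

Lemma mu_reset_lt i k : reset i -> k < i -> mu i < mu k.
Proof.
rewrite /reset; case: i => [|i] //= unmarked_i le_ki.
by have [_ lt_mu _] := mu_unmarked unmarked_i; have := @mu_mono k i le_ki; lia.
Qed.

Lemma theta_lt_mu i k : k < i -> mu k != mu i -> theta i < mu k.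
Proof.
move=> lt_ki neq_mu; have le_mu := mu_mono (ltnW lt_ki).
case: (smax_attained n unmarked lam k) => [mu0 | [a [/andP [le_ka lt_an] ua mu_a]]].
  by move: neq_mu le_mu; rewrite /mu mu0; lia.
move: ua mu_a; rewrite -/(mu k) => /andP [/andP [lt_a1 lt_lam] not_marked] mu_a.
case: (leqP i a) => [le_ia | lt_ai].
  have : lam a <= mu i.
    by apply: leq_smax; rewrite ?le_ia // /unmarked /corner lt_a1 lt_lam.
  by move: neq_mu; rewrite mu_a; lia.
have mu_le : mu i <= lam a.+1 by apply: leq_trans (mu_le_lam i) (premin_mono _ lt_ai).
have rho_le : rho i <= lam a.+1.
  apply/smax_leP => s /andP [le_s _] marked_s; apply: premin_mono.
  have : s != a by apply: contraNneq not_marked => <-.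
  lia.
by rewrite /theta mu_a; lia.
Qed.

Lemma reset_mu_eq i : exists k, [/\ k <= i, reset k & mu k = mu i].
Proof.
elim: i => [|i [k [le_ki reset_k mu_k]]]; first by exists 0.
case u: (unmarked i); first by exists i.+1; rewrite /reset /= u.
by exists k; rewrite muS ?u // -mu_k; split=> //; lia.
Qed.

Fixpoint used k :=
  if k is k'.+1 then rcons (used k') (first_free n (used k') (start k')) else [::].

Definition q i := first_free n (used i) (start i).

Lemma usedE k : used k = map q (iota 0 k).
Proof.
elim: k => [|k IH] //; rewrite -addn1 iotaD map_cat -IH cats1 /=.
by rewrite addn1.
Qed.

Lemma size_used k : size (used k) = k.
Proof. by rewrite usedE size_map size_iota. Qed.

Lemma mem_usedP v k : reflect (exists2 i, i < k & q i = v) (v \in used k).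
Proof.
rewrite usedE; apply: (iffP mapP) => [[i] | [i lt_ik <-]].
  by rewrite mem_iota => /andP [_ lt_ik] ->; exists i.
by exists i; rewrite ?mem_iota.
Qed.

Definition q_spec i := [/\ start i <= q i, q i < n, q i \notin used i,
  forall w, start i <= w < q i -> w \in used i & reset i -> q i = mu i].

Section Step.
Variable i : nat.
Hypotheses (lt_in : i < n) (q_spec_earlier : forall k, k < i -> q_spec k).

Lemma q_earlier_row k : k < i -> theta i < q k \/ reset k /\ q k = mu k.
Proof.
move=> lt_ki; have [start_le _ _ _ q_reset] := q_spec_earlier lt_ki.
case reset_k: (reset k); first by right; split=> //; apply: q_reset.
by left; move: start_le; rewrite /start reset_k; have := theta_mono (ltnW lt_ki); lia.
Qed.

Lemma mu_unused : reset i -> mu i \notin used i.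
Proof.
move=> reset_i; apply/negP => /mem_usedP [k lt_ki q_k].
case: (q_earlier_row lt_ki) => [| [_ q_mu]]; first by rewrite q_k /theta; lia.
by have := mu_reset_lt reset_i lt_ki; rewrite -q_mu q_k ltnn.
Qed.

(* For a non-reset row, mu i is already used by an earlier reset row, so the
   i used values cannot also cover the n - theta i - 1 >= i values above
   theta i. *)
Lemma free_above_theta : ~~ reset i -> exists2 v, theta i < v < n & v \notin used i.
Proof.
move=> not_reset; set above := iota (theta i).+1 (n - (theta i).+1).
have [/allP above_used | ] := boolP (all (mem (used i)) above); last first.
  by rewrite -has_predC => /hasP [v]; rewrite mem_iota => lt_v unused; exists v => //; lia.
have [k [le_ki reset_k mu_k]] := reset_mu_eq i.
have lt_ki : k < i by rewrite ltn_neqAle le_ki andbT; apply: contraNneq not_reset => <-.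
have [_ _ _ _ q_reset] := q_spec_earlier lt_ki.
have uniq_vals : uniq (mu i :: above).
  by rewrite /= iota_uniq andbT mem_iota /theta; lia.
have sub_used : {subset mu i :: above <= used i}.
  move=> w; rewrite inE => /orP [/eqP -> | /above_used //].
  by apply/mem_usedP; exists k; rewrite // q_reset.
have := uniq_leq_size uniq_vals sub_used; rewrite /= size_iota size_used.
by have := theta_add_lt lt_in; lia.
Qed.

End Step.

Lemma q_specP i : i < n -> q_spec i.
Proof.
elim/ltn_ind: i => i IH lt_in.
have q_spec_earlier k : k < i -> q_spec k.
  by move=> lt_ki; apply: IH (ltn_trans lt_ki lt_in).
case reset_i: (reset i).
  have unused := mu_unused lt_in q_spec_earlier reset_i.
  have lt_mu : mu i < n by apply: leq_ltn_trans (mu_le_lam i) (premin_lt _ lt_in).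
  have q_mu : q i = mu i by rewrite /q /start reset_i first_free_id.
  by rewrite /q_spec /start reset_i q_mu; split=> // w; lia.
have [v lt_v unused] := free_above_theta lt_in q_spec_earlier (negbT reset_i).
have ge_v : start i <= v < n by rewrite /start reset_i.
have [ge_start lt_qn q_unused q_least] := first_freeP ge_v unused.
by split=> //; rewrite reset_i.
Qed.

Lemma q_lt i : i < n -> q i < n.
Proof. by case/q_specP. Qed.

Lemma q_inj i j : i < n -> j < n -> q i = q j -> i = j.
Proof.
move=> lt_in lt_jn eq_q; case: (ltngtP i j) => // [lt_ij | lt_ji].
  have [_ _ /negP unused _ _] := q_specP lt_jn.
  by case: unused; apply/mem_usedP; exists i.
have [_ _ /negP unused _ _] := q_specP lt_in.
by case: unused; apply/mem_usedP; exists j.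
Qed.

Lemma uniq_used k : k <= n -> uniq (used k).
Proof.
elim: k => [|k IH] le_kn //=; rewrite rcons_uniq IH ?andbT; last lia.
by have [] := q_specP le_kn.
Qed.

Definition q_ord (o : 'I_n) : 'I_n := Ordinal (q_lt (ltn_ord o)).

Lemma q_ord_inj : injective q_ord.
Proof. by move=> a b /(congr1 val) /(q_inj (ltn_ord a) (ltn_ord b)) /val_inj. Qed.

Definition Q : {perm 'I_n} := perm q_ord_inj.

Lemma pfun_Q k : k < n -> pfun Q k = q k.
Proof. by move=> lt_kn; rewrite (pfun_Sub Q lt_kn) permE. Qed.

Lemma start_le i : start i <= (theta i).+1.
Proof. by rewrite /start /theta; case: (reset i) => //; lia. Qed.

Lemma used_low i v : i < n -> v <= theta i ->
  (v \in used i) = (v == mu i) && ~~ reset i.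
Proof.
move=> lt_in le_v; apply/idP/idP.
  case/mem_usedP=> k lt_ki q_k; subst v.
  have [start_le_k _ _ _ q_reset] := q_specP (ltn_trans lt_ki lt_in).
  case reset_k: (reset k); last first.
    by move: start_le_k; rewrite /start reset_k; have := theta_mono (ltnW lt_ki); lia.
  rewrite q_reset //; case: (eqVneq (mu k) (mu i)) => [eq_mu | neq_mu].
    apply/negP => reset_i.
    by have := mu_reset_lt reset_i lt_ki; rewrite eq_mu ltnn.
  by have := theta_lt_mu lt_ki neq_mu; lia.
case/andP=> /eqP -> not_reset; have [k [le_ki reset_k mu_k]] := reset_mu_eq i.
have lt_ki : k < i by rewrite ltn_neqAle le_ki andbT; apply: contraNneq not_reset => <-.
have [_ _ _ _ q_reset] := q_specP (ltn_trans lt_ki lt_in).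
by apply/mem_usedP; exists k; rewrite ?q_reset.
Qed.

Lemma Qinv_gt i j : i < n -> j < n -> (i < pfun Q^-1 j) = (j \notin used i.+1).
Proof.
move=> lt_in lt_jn; set k := pfun Q^-1 j.
have lt_kn : k < n by apply: pfun_lt.
have q_k : q k = j by rewrite -pfun_Q // pfunVK.
apply/idP/idP => [lt_ik | unused].
  apply/negP => /mem_usedP [k' lt_k'i q_k'].
  have lt_k'n : k' < n by apply: ltn_trans lt_k'i (leq_ltn_trans lt_ik lt_kn).
  by have := q_inj lt_k'n lt_kn; rewrite q_k' q_k; lia.
by rewrite ltnNge; apply: contra unused => le_ki; apply/mem_usedP; exists k.
Qed.

Lemma inD_Q i j :
  inD Q i j = [&& i < n, j < start i & ~~ ((j == mu i) && ~~ reset i)].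
Proof.
rewrite inDE; case: (ltnP i n) => lt_in //=.
have [start_le_q lt_qn _ q_least _] := q_specP lt_in.
have start_le_n : start i <= n by have := start_le i; have := theta_add_lt lt_in; lia.
case: (ltnP j n) => lt_jn /=; last by rewrite ltnNge (leq_trans start_le_n lt_jn).
rewrite pfun_Q // Qinv_gt // mem_rcons inE negb_or -/(q i).
case: (ltnP j (start i)) => [lt_j | ge_j].
  have lt_jq : j < q i := leq_trans lt_j start_le_q.
  by rewrite lt_jq neq_ltn lt_jq used_low //; have := start_le i; lia.
by case: (ltnP j (q i)) => // lt_jq; rewrite q_least ?ge_j ?andbF.
Qed.

Lemma rank_Q i j : i < n -> j <= (theta i).+1 ->
  rank Q i j = (mu i < j) && ~~ reset i.
Proof.
move=> lt_in le_j; rewrite rankE ?(ltnW lt_in) //.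
rewrite (@eq_in_count _ _ (fun k => q k < j)); last first.
  by move=> k; rewrite mem_iota => /andP [_ lt_ki]; rewrite /= pfun_Q //; lia.
rewrite -(count_map q (fun v => v < j)) -usedE.
rewrite (@eq_in_count _ _ (fun v => (v == mu i) && ((mu i < j) && ~~ reset i))); last first.
  move=> v used_v /=; case: (ltnP v j) => [lt_vj | ge_vj].
    move: used_v; rewrite used_low //; last lia.
    by case/andP=> /eqP eq_v not_reset; subst v; rewrite eqxx lt_vj not_reset.
  by case: (v =P mu i) => // <-; rewrite ltnNge ge_vj.
case C: ((mu i < j) && ~~ reset i); last first.
  by rewrite (@eq_count _ _ pred0) ?count_pred0 // => v; rewrite andbF.
move/andP: C => [lt_mu not_reset].
rewrite (@eq_count _ _ (pred1 (mu i))) => [|v]; last by rewrite andbT.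
rewrite count_uniq_mem ?uniq_used ?(ltnW lt_in) // used_low // ?eqxx ?not_reset //.
by rewrite /theta leq_maxl.
Qed.

Lemma ess_rank_Q i j :
  (ess Q i j && (rank Q i j == 0)) = unmarked i && (j.+1 == lam i) /\
  (ess Q i j && (rank Q i j == 1)) = [&& 0 < i, marked i.-1 & j == lam i.-1].
Proof.
have mu_u : unmarked i -> mu i = lam i /\ mu i.+1 < mu i /\ i.+1 < n.
  by case/mu_unmarked.
have mu_nu : ~~ unmarked i -> mu i.+1 = mu i := @muS i.
have rho_m : 0 < i -> marked i.-1 ->
    rho i = lam i.-1 /\ rho i.+1 < rho i /\ lam i < lam i.-1 /\ i.+1 < n.
  by move=> i_gt0 /(rho_marked i_gt0) [].
have rho_nm : (i == 0) || ~~ marked i.-1 -> rho i.+1 = rho i := @rhoS i.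
have rho_le := rhoS_le_lam i.
have mu_le := mu_le_lam i.
have m_nu : marked i.-1 -> ~~ unmarked i.-1 by move=> m; rewrite /unmarked m andbF.
have D_lt : inD Q i j -> i.+1 < n := @inD_lt _ Q i j.
have D_rank : inD Q i j -> rank Q i j = (mu i < j) && ~~ reset i.
  move=> Dij; apply: rank_Q; first by have := D_lt Dij; lia.
  by move: Dij; rewrite inD_Q => /and3P [_ lt_j _]; have := start_le i; lia.
move: mu_u mu_nu rho_m rho_nm m_nu D_lt D_rank.
rewrite /ess !inD_Q /start /reset /theta /=.
case i0: (i == 0); case: (unmarked i); case: (marked i.-1); case: (unmarked i.-1);
  move=> /= mu_u mu_nu rho_m rho_nm m_nu D_lt D_rank; split; lia.
Qed.

Lemma schroder_Q : schroder Q.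
Proof.
apply/schroder_rankP => i j Dij; move: (Dij); rewrite inD_Q => /and3P [lt_in lt_j _].
by rewrite rank_Q //; [case: (_ && _) | have := start_le i; lia].
Qed.

Lemma phi_Q : phi_rel Q sg.
Proof.
split=> [i j | i j /and3P [Dij _ _]]; last exact: avoid132_rank0.
have rank_ne1 : ess Q i j && (rank Q i j != 1) = ess Q i j && (rank Q i j == 0).
  case Eij: (ess Q i j) => //=; have /and3P [Dij _ _] := Eij.
  by have := proj1 (schroder_rankP Q) schroder_Q i j Dij; case: (rank Q i j) => [|[|]].
rewrite /ess_star rank_ne1 (proj1 (ess_rank_Q i j)) (proj2 (ess_rank_Q i.+1 j.+1)).
rewrite (ess_avoid132 sg132) /= /unmarked.
case m: (marked i); last by rewrite andbT orbF /corner andbA.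
by have [/andP [-> ->] _] := marked_corner m; rewrite andbF.
Qed.

Lemma lifted_set_Q : lifted_set sg Q = M.
Proof.
apply/setP => x; rewrite inE /lifted (proj2 (ess_rank_Q x.1.+1 x.2.+1)) /=.
have col_M y : y \in M -> y.2.+1 = lam y.1.
  move=> My; have := subsetP M_inner y My.
  by rewrite inE (ess_avoid132 sg132) => /andP [/and3P [_ _ /eqP]].
apply/idP/idP => [/and3P [_ /existsP [y /andP [My /eqP y1]] /eqP x2] | Mx].
  suff -> : x = y by [].
  have := col_M y My; rewrite y1 -x2.
  case: x y y1 {My x2} => [x1 x2] [y1 y2] /= eq1 eq2.
  by congr pair; apply: val_inj => /=; lia.
have := subsetP M_inner x Mx; rewrite inE => /andP [-> _] /=.
by rewrite (col_M x Mx) eqxx andbT; apply/existsP; exists x; rewrite Mx eqxx.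
Qed.

End Construction.

Theorem proposition2p8 (n : nat) (sigma : {perm 'I_n}) :
  avoids sigma [:: 0; 2; 1] ->
  forall A : {set {perm 'I_n}},
    (forall pi : {perm 'I_n}, pi \in A <-> (schroder pi /\ phi_rel pi sigma)) ->
    #|A| =
    2 ^ #|[set x : 'I_n * 'I_n | ess sigma x.1 x.2 && (x.1.+1 + x.2.+1 < n)]|.
Proof.
move=> sigma132 A memA; rewrite -card_powerset -/(inner_ess sigma).
have lifted_inj_A : {in A &, injective (lifted_set sigma)}.
  by move=> p1 p2 /memA [S1 phi1] /memA [S2 phi2]; apply: lifted_inj.
rewrite -(card_in_imset lifted_inj_A).
suff -> : lifted_set sigma @: A = powerset (inner_ess sigma) by [].
apply/eqP; rewrite eqEsubset; apply/andP; split; apply/subsetP => M.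
  by case/imsetP=> p _ ->; rewrite powersetE lifted_set_sub.
rewrite powersetE => M_inner; apply/imsetP; exists (Q sigma132 M_inner).
  by apply/memA; split; [apply: schroder_Q | apply: phi_Q].
by rewrite lifted_set_Q.
Qed.
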